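(* Central permutation fails in general: there exist a language $L$, an $L$-algebra $\mathfrak A$ with universe $A$, and elements $a,b,c,d\in A$ such that $a:b\approx_{\mathfrak A}c:d$ holds but $a:c\approx_{\mathfrak A}b:d$ does not hold.
   Context: Let $L$ be a language of algebras: a set of function symbols, each with an arity in $\mathbb N$ (constants are 0-ary function symbols). Fix a countably infinite set $X$ of variables; $T_{L,X}$ is the set of $L$-terms over $X$, and $X(s)$ denotes the set of variables occurring in a term $s$. For an $L$-algebra $\mathfrak A$ with universe $A$, every term $s$ induces a function $s^{\mathfrak A}$, evaluated at assignments of elements of $A$ to variables. An arrow of $\mathfrak A$ is a pair $(a,b)\in A\times A$, written $a\to b$. The generalizations of an arrow $a\to b$ in $\mathfrak A$ are the pairs of arbitrary terms $s\to t$ with $s,t\in T_{L,X}$ such that there is an assignment $\sigma$ of elements of $A$ to the variables in $X(s)\cup X(t)$ with $s^{\mathfrak A}(\sigma)=a$ and $t^{\mathfrak A}(\sigma)=b$; their set is denoted $\uparrow_{\mathfrak A}(a\to b)$. For $L$-algebras $\mathfrak A,\mathfrak B$, an arrow $a\to b$ of $\mathfrak A$ and an arrow $c\to d$ of $\mathfrak B$, set $(a\to b)\uparrow_{(\mathfrak A,\mathfrak B)}(c\to d):=\uparrow_{\mathfrak A}(a\to b)\cap\uparrow_{\mathfrak B}(c\to d)$. A pair of terms $s\to t$ is trivial in $(\mathfrak A,\mathfrak B)$ if it belongs to $\uparrow_{\mathfrak A}(e)$ for every arrow $e$ of $\mathfrak A$ and to $\uparrow_{\mathfrak B}(e')$ for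 every arrow $e'$ of $\mathfrak B$. We write $a\to b\lesssim_{(\mathfrak A,\mathfrak B)}c\to d$ iff either (i) every element of $\uparrow_{\mathfrak A}(a\to b)\cup\uparrow_{\mathfrak B}(c\to d)$ is trivial in $(\mathfrak A,\mathfrak B)$, or (ii) $(a\to b)\uparrow_{(\mathfrak A,\mathfrak B)}(c\to d)$ contains an element not trivial in $(\mathfrak A,\mathfrak B)$ and, for every arrow $c'\to d'$ of $\mathfrak B$, the inclusion $(a\to b)\uparrow_{(\mathfrak A,\mathfrak B)}(c\to d)\subseteq(a\to b)\uparrow_{(\mathfrak A,\mathfrak B)}(c'\to d')$ implies equality of these two sets. Define $a\to b\approx_{(\mathfrak A,\mathfrak B)}c\to d$ iff $a\to b\lesssim_{(\mathfrak A,\mathfrak B)}c\to d$ and $c\to d\lesssim_{(\mathfrak B,\mathfrak A)}a\to b$. For $a,b\in A$ and $c,d\in B$, the similarity-based analogical proportion $a:b\approx_{(\mathfrak A,\mathfrak B)}c:d$ holds iff $a\to b\approx_{(\mathfrak A,\mathfrak B)}c\to d$ and $b\to a\approx_{(\mathfrak A,\mathfrak B)}d\to c$. We write $\approx_{\mathfrak A}$ for $\approx_{(\mathfrak A,\mathfrak A)}$. *)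

From Stdlib Require Import Fin.

Set Implicit Arguments.

Record language := Language { symb : Type; arity : symb -> nat }.

Inductive term (L : language) : Type :=
| Var : nat -> term L
| App : forall f : symb L, (Fin.t (@arity L f) -> term L) -> term L.

Record algebra (L : language) := Algebra {
  carrier :> Type;
  op : forall f : symb L, (Fin.t (@arity L f) -> carrier) -> carrier }.

Fixpoint eval (L : language) (A : algebra L) (sigma : nat -> carrier A)
  (s : term L) : carrier A :=
  match s with
  | Var _ x => sigma x
  | App f args => op A f (fun i => eval A sigma (args i))
  end.

(* Generalizations of the arrow a -> b in A: pairs of terms (s, t). *)
Definition up (L : language) (A : algebra L) (a b : carrier A)
  (p : term L * term L) : Prop :=
  exists sigma : nat -> carrier A, eval A sigma (fst p) = a /\ eval A sigma (snd p) = b.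

Definition upAB (L : language) (A B : algebra L) (a b : carrier A) (c d : carrier B)
  (p : term L * term L) : Prop := up A a b p /\ up B c d p.

Definition trivial (L : language) (A B : algebra L) (p : term L * term L) : Prop :=
  (forall e1 e2 : carrier A, up A e1 e2 p) /\ (forall e1 e2 : carrier B, up B e1 e2 p).

Definition lesssim (L : language) (A B : algebra L) (a b : carrier A) (c d : carrier B)
  : Prop :=
  (forall p, up A a b p \/ up B c d p -> trivial A B p)
  \/
  ((exists p, upAB A B a b c d p /\ ~ trivial A B p) /\
   forall c' d' : carrier B,
     (forall p, upAB A B a b c d p -> upAB A B a b c' d' p) ->
     (forall p, upAB A B a b c' d' p <-> upAB A B a b c d p)).

Definition approx_arrow (L : language) (A B : algebra L) (a b : carrier A)
  (c d : carrier B) : Prop :=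
  lesssim A B a b c d /\ lesssim B A c d a b.

Definition analogy (L : language) (A B : algebra L) (a b : carrier A)
  (c d : carrier B) : Prop :=
  approx_arrow A B a b c d /\ approx_arrow A B b a d c.

From Stdlib Require Import PeanoNat.

(* In the language with no function symbols every term is a variable.  A pair
   [x -> y] of distinct variables generalizes every arrow, hence is trivial,
   while [x -> x] generalizes exactly the loops [e -> e].  So between non-loop
   arrows all generalizations are trivial and clause (i) of [lesssim] holds,
   whereas a loop [a -> a] has the non-trivial generalization [x -> x], which
   no non-loop arrow [b -> d] shares: this gives [0 : 1 ≈ 0 : 2] but not
   [0 : 0 ≈ 1 : 2] in the bare set of natural numbers. *)

Definition empty_language : language := Language (fun f : Empty_set => match f with end).

Definition bare_algebra (T : Type) : algebra empty_language :=
  @Algebra empty_language T (fun f => match f with end).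

Lemma term_empty_language_var (t : term empty_language) :
  exists x, t = Var empty_language x.
Proof. destruct t as [x | f args]; [eauto | destruct f]. Qed.

Section BareAlgebra.

Variable T : Type.
Let A := bare_algebra T.

Lemma trivial_var_neq (x y : nat) :
  x <> y -> trivial A A (Var empty_language x, Var empty_language y).
Proof.
  intros Hxy.
  assert (Hup : forall e1 e2 : carrier A, up A e1 e2 (Var empty_language x, Var empty_language y)).
  { intros e1 e2. exists (fun z => if Nat.eq_dec z x then e1 else e2); simpl.
    destruct (Nat.eq_dec x x) as [_ | Hxx]; [| congruence].
    destruct (Nat.eq_dec y x) as [Hyx | _]; [congruence | auto]. }
  split; exact Hup.
Qed.

Lemma up_var_var_eq (x : nat) (a b : carrier A) :
  up A a b (Var empty_language x, Var empty_language x) -> a = b.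
Proof. intros [sigma [Ha Hb]]; simpl in *; congruence. Qed.

Lemma trivial_or_up_loop (p : term empty_language * term empty_language) :
  trivial A A p \/ (forall a b : carrier A, up A a b p -> a = b).
Proof.
  destruct p as [s t].
  destruct (term_empty_language_var s) as [x ->], (term_empty_language_var t) as [y ->].
  destruct (Nat.eq_dec x y) as [<- | Hxy].
  - right; apply up_var_var_eq.
  - left; exact (trivial_var_neq x y Hxy).
Qed.

Lemma lesssim_neq (a b c d : carrier A) : a <> b -> c <> d -> lesssim A A a b c d.
Proof.
  intros Hab Hcd; left; intros p Hp.
  destruct (trivial_or_up_loop p) as [Htriv | Hloop]; [exact Htriv |].
  exfalso; destruct Hp as [Hp | Hp]; apply Hloop in Hp; auto.
Qed.

Lemma analogy_neq (a b c d : carrier A) :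
  a <> b -> c <> d -> analogy A A a b c d.
Proof.
  intros Hab Hcd.
  repeat split; apply lesssim_neq; auto.
Qed.

Lemma not_lesssim_loop_neq (a b d : carrier A) : b <> d -> ~ lesssim A A a a b d.
Proof.
  intros Hbd [Hall | [[p [[_ Hp] Hnontriv]] _]].
  - assert (Hloop : up A a a (Var empty_language 0, Var empty_language 0))
      by (exists (fun _ => a); auto).
    destruct (Hall _ (or_introl Hloop)) as [Htriv _].
    exact (Hbd (up_var_var_eq 0 b d (Htriv b d))).
  - destruct (trivial_or_up_loop p) as [Htriv | Hloop]; [contradiction |].
    exact (Hbd (Hloop _ _ Hp)).
Qed.

End BareAlgebra.

Theorem theorem3 :
  exists (L : language) (A : algebra L) (a b c d : carrier A),
    analogy A A a b c d /\ ~ analogy A A a c b d.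
Proof.
  exists empty_language, (bare_algebra nat), 0, 1, 0, 2.
  split.
  - apply analogy_neq; discriminate.
  - intros [[Hless _] _].
    apply (not_lesssim_loop_neq nat 0 1 2); [discriminate | exact Hless].
Qed.
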